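(* Let $G$ be a group, $g,h\in G$, and $k=\min\{|G:C_G(g)|,|G:C_G(h)|\}$, assumed finite. If the set $\{x\in G:[g,h^x]=1\}$ is $k$-large in $G$, then every element of the conjugacy class $g^G$ commutes with every element of the conjugacy class $h^G$.
   Context: $[a,b]=a^{-1}b^{-1}ab$, $a^x=x^{-1}ax$. A subset $X\subseteq G$ is $k$-large in $G$ if the intersection of any $k$ left translates $a_1X\cap\dots\cap a_kX$ ($a_i\in G$) is non-empty. *)

From Stdlib Require Import Arith.

Record group := Group {
  carrier :> Type;
  mul : carrier -> carrier -> carrier;
  inv : carrier -> carrier;
  one : carrier;
  mulA : forall a b c, mul a (mul b c) = mul (mul a b) c;
  mul1g : forall a, mul one a = a;
  mulVg : forall a, mul (inv a) a = one
}.

Arguments mul {g}.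
Arguments inv {g}.
Arguments one {g}.

Definition conjg {G : group} (a x : G) : G := mul (inv x) (mul a x).
Definition commg {G : group} (a b : G) : G :=
  mul (inv a) (mul (inv b) (mul a b)).

Definition in_centralizer {G : group} (g x : G) : Prop := mul x g = mul g x.

(* A subset H (here given as a predicate) has finite index n in G:
   there are n elements a_0..a_{n-1} such that every x lies in exactly one
   left coset a_i H  (x in a_i H  iff  a_i^{-1} x in H). *)
Definition has_index {G : group} (H : G -> Prop) (n : nat) : Prop :=
  exists a : nat -> G,
    forall x : G, exists i, i < n /\ H (mul (inv (a i)) x) /\
      forall j, j < n -> H (mul (inv (a j)) x) -> j = i.

(* k = min{|G:C_G(g)|, |G:C_G(h)|}, with infinite indices counted as infinity;
   asserting this for a natural number k includes the finiteness assumption. *)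
Definition is_min_index {G : group} (g h : G) (k : nat) : Prop :=
  (has_index (in_centralizer g) k /\
     forall m, has_index (in_centralizer h) m -> k <= m)
  \/
  (has_index (in_centralizer h) k /\
     forall m, has_index (in_centralizer g) m -> k <= m).

(* X is k-large: any k left translates a_1 X, ..., a_k X have a common point
   (y in a X iff a^{-1} y in X). *)
Definition k_large {G : group} (X : G -> Prop) (k : nat) : Prop :=
  forall a : nat -> G, exists y : G,
    forall i, i < k -> X (mul (inv (a i)) y).

(* Let C be whichever of C_G(g), C_G(h) has index k, with transversal
   a_1, ..., a_k, and let X = {x | [g, h^x] = 1}.  Applied to the k translates
   a_i w^-1 (resp. a_i), k-largeness puts a point of X in every left coset wC
   (resp. right coset Cw).  But X is a union of left cosets of C_G(g) and of
   right cosets of C_G(h), so X = G, i.e. g commutes with every conjugate of h;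
   conjugating by x gives [g^x, h^y] = 1. *)
From Stdlib Require Import Arith.

Definition commute {G : group} (a b : G) : Prop := mul a b = mul b a.

Section GroupFacts.

Context {G : group}.
Implicit Types a b c x y : G.

Lemma mulgV a : mul a (inv a) = one.
Proof.
  rewrite <- (mul1g G (mul a (inv a))), <- (mulVg G (inv a)) at 1.
  rewrite <- mulA, (mulA G (inv a) a), mulVg, mul1g, mulVg. reflexivity.
Qed.

Lemma mulg1 a : mul a one = a.
Proof. rewrite <- (mulVg G a), mulA, mulgV, mul1g. reflexivity. Qed.

Lemma mulKg a b : mul (inv a) (mul a b) = b.
Proof. rewrite mulA, mulVg, mul1g. reflexivity. Qed.

Lemma mulKVg a b : mul a (mul (inv a) b) = b.
Proof. rewrite mulA, mulgV, mul1g. reflexivity. Qed.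

Lemma mulgK a b : mul (mul b a) (inv a) = b.
Proof. rewrite <- mulA, mulgV, mulg1. reflexivity. Qed.

Lemma mulgKV a b : mul (mul b (inv a)) a = b.
Proof. rewrite <- mulA, mulVg, mulg1. reflexivity. Qed.

Lemma invg_unique a b : mul a b = one -> inv a = b.
Proof. intro ab1. rewrite <- (mulg1 (inv a)), <- ab1, mulKg. reflexivity. Qed.

Lemma invMg a b : inv (mul a b) = mul (inv b) (inv a).
Proof.
  apply invg_unique.
  rewrite <- mulA, (mulA G b), mulgV, mul1g, mulgV. reflexivity.
Qed.

Lemma invgK a : inv (inv a) = a.
Proof. apply invg_unique, mulVg. Qed.

Lemma commgP a b : commg a b = one <-> commute a b.
Proof.
  unfold commg, commute. split; intro E.
  - assert (conj_a : mul (inv b) (mul a b) = a).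
    { rewrite <- (mulKVg a (mul (inv b) (mul a b))), E, mulg1. reflexivity. }
    rewrite <- conj_a at 2. rewrite mulKVg. reflexivity.
  - rewrite E, mulKg, mulVg. reflexivity.
Qed.

Lemma conjMg a b x : conjg (mul a b) x = mul (conjg a x) (conjg b x).
Proof. unfold conjg. rewrite <- !mulA, mulKVg. reflexivity. Qed.

Lemma conjgM a x y : conjg a (mul x y) = conjg (conjg a x) y.
Proof. unfold conjg. rewrite invMg, <- !mulA. reflexivity. Qed.

Lemma conjgK a x : conjg (conjg a x) (inv x) = a.
Proof. unfold conjg. rewrite invgK, !mulA, mulgV, mul1g, mulgK. reflexivity. Qed.

Lemma conjg_fix a c : commute c a -> conjg a c = a.
Proof. intro ca. unfold conjg. rewrite <- ca, mulKg. reflexivity. Qed.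

Lemma commute_conjg a b x : commute (conjg a x) (conjg b x) <-> commute a b.
Proof.
  unfold commute. split; intro E.
  - rewrite <- !conjMg in E.
    rewrite <- (conjgK (mul a b) x), E, conjgK. reflexivity.
  - rewrite <- !conjMg, E. reflexivity.
Qed.

End GroupFacts.

Section LargeSetsMeetCosets.

Context {G : group} {H X : G -> Prop} {k : nat}.
Hypotheses (indexH : has_index H k) (largeX : k_large X k).

Lemma k_large_meets_lcosets (w : G) : exists c, H c /\ X (mul w c).
Proof.
  destruct indexH as [a transversal].
  destruct (largeX (fun i => mul (a i) (inv w))) as [y Xy].
  destruct (transversal y) as [i [lt_i_k [Hc _]]].
  exists (mul (inv (a i)) y). split; [exact Hc |].
  specialize (Xy i lt_i_k). cbn beta in Xy.
  rewrite invMg, invgK, <- mulA in Xy. exact Xy.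
Qed.

Lemma k_large_meets_rcosets (w : G) : exists c, H c /\ X (mul c w).
Proof.
  destruct indexH as [a transversal].
  destruct (largeX a) as [y Xy].
  destruct (transversal (mul y (inv w))) as [i [lt_i_k [Hc _]]].
  exists (mul (inv (a i)) (mul y (inv w))). split; [exact Hc |].
  rewrite <- mulA, mulgKV. exact (Xy i lt_i_k).
Qed.

End LargeSetsMeetCosets.

Section CommutingConjugates.

Context {G : group} {g h : G}.

Lemma commute_conjg_lcoset_cent_g (w c : G) :
  in_centralizer g c -> commute g (conjg h (mul w c)) -> commute g (conjg h w).
Proof.
  intros cg E.
  rewrite conjgM, <- (conjg_fix g c cg), commute_conjg in E. exact E.
Qed.

Lemma commute_conjg_rcoset_cent_h (w c : G) :
  in_centralizer h c -> commute g (conjg h (mul c w)) -> commute g (conjg h w).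
Proof. intros ch E. rewrite conjgM, (conjg_fix h c ch) in E. exact E. Qed.

Lemma commute_conj_classes :
  (forall w, commute g (conjg h w)) ->
  forall x y, commute (conjg g x) (conjg h y).
Proof.
  intros all_w x y.
  rewrite <- (mulgKV x y), conjgM, commute_conjg. apply all_w.
Qed.

End CommutingConjugates.

Theorem theorem5p9 (G : group) (g h : G) (k : nat) :
  is_min_index g h k ->
  k_large (fun x : G => commg g (conjg h x) = one) k ->
  forall x y : G, mul (conjg g x) (conjg h y) = mul (conjg h y) (conjg g x).
Proof.
  intros min_k large.
  apply commute_conj_classes. intro w.
  destruct min_k as [[index_g _] | [index_h _]].
  - destruct (k_large_meets_lcosets index_g large w) as [c [cg Xwc]].
    apply commgP in Xwc. exact (commute_conjg_lcoset_cent_g w c cg Xwc).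
  - destruct (k_large_meets_rcosets index_h large w) as [c [ch Xcw]].
    apply commgP in Xcw. exact (commute_conjg_rcoset_cent_h w c ch Xcw).
Qed.
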